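(* For every $n\ge 1$ with $n\neq 3$, the fan $F_n$ is distance antimagic; the fan $F_3$ is not distance antimagic.
   Context: The fan $F_n$ is obtained from a path $x_1x_2\cdots x_n$ by adding a center vertex $x_0$ adjacent to all of $x_1,\dots,x_n$; it has $n+1$ vertices. For a graph $G=(V,E)$ with $v=|V|$ and a bijection $f:V\to\{1,\dots,v\}$, the vertex-weight of $x$ is $w(x)=\sum_{y\in N(x)}f(y)$ with $N(x)$ the set of neighbours of $x$. $G$ is distance antimagic if it admits a bijection $f$ under which all vertex-weights are pairwise distinct. *)

From mathcomp Require Import all_boot.
Set Implicit Arguments. Unset Strict Implicit. Unset Printing Implicit Defensive.

(* Fan F_n on vertex type 'I_n.+1: vertex 0 is the centre x_0,
   vertex i (1 <= i <= n) is the path vertex x_i. *)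
Definition fan_adj (n : nat) : rel 'I_n.+1 :=
  fun i j =>
    ((i == 0 :> nat) && (j != 0 :> nat))
    || ((j == 0 :> nat) && (i != 0 :> nat))
    || [&& (i != 0 :> nat), (j != 0 :> nat) & ((i.+1 == j :> nat) || (j.+1 == i :> nat))].

Definition is_vertex_labeling (T : finType) (f : T -> nat) : Prop :=
  injective f /\ (forall x, 1 <= f x <= #|T|).

Definition vweight (T : finType) (adj : rel T) (f : T -> nat) (x : T) : nat :=
  \sum_(y : T | adj x y) f y.

Definition distance_antimagic (T : finType) (adj : rel T) : Prop :=
  exists f : T -> nat, is_vertex_labeling f /\ injective (vweight adj f).

From mathcomp Require Import all_boot zify.

(* For even n the centre gets n+1 and x_i gets i: interior path
   weights are n+2i+1 (odd), x_n weighs 2n, the centre n(n+1)/2.  For odd n the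
   centre gets 1 and x_i gets i+1: interior path weights are 2i+3 (odd), x_1
   weighs 4, x_n weighs n+1, the centre n(n+3)/2; the only collision is x_1 and
   x_3 for n = 3.  Finally, F_3 is not antimagic because x_1 and x_3 have the
   same neighbourhood {x_0, x_2}, and twins always share their weight. *)

Lemma sum_ord_pick m k (g : nat -> nat) :
  \sum_(i < m) (if i == k :> nat then g i else 0) = if k < m then g k else 0.
Proof.
elim: m => [|m IH]; first by rewrite big_ord0.
rewrite big_ord_recr /= IH ltnS.
by case: (ltngtP k m) => [km|km|->]; rewrite ?eqxx ?leqnn ?ltnn ?addn0.
Qed.

Lemma double_sum_succ n : (\sum_(1 <= i < n.+1) i).*2 = n * n.+1.
Proof.
elim: n => [|n IH]; first by rewrite big_geq.
by rewrite big_nat_recr //= doubleD IH; lia.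
Qed.

Definition fan_weight (n : nat) (g : nat -> nat) (i : nat) : nat :=
  if i == 0 then \sum_(1 <= j < n.+1) g j
  else g 0 + (if 1 < i then g i.-1 else 0) + (if i < n then g i.+1 else 0).

Lemma vweight_fan n (g : nat -> nat) (x : 'I_n.+1) :
  vweight (@fan_adj n) (fun y => g y) x = fan_weight n g x.
Proof.
rewrite /vweight /fan_weight big_mkcond /=; case: eqP => [x0|/eqP x0].
  rewrite big_ord_recl /fan_adj x0 /= add0n big_add1 big_mkord.
  by apply: eq_bigr => i _.
have nbhd_x (i : 'I_n.+1) : (if fan_adj x i then g i else 0) =
    (if i == 0 :> nat then g i else 0)
  + (if i == x.-1 :> nat then (if 1 < x then g i else 0) else 0)
  + (if i == x.+1 :> nat then g i else 0).
  move: x0; rewrite /fan_adj; case: x => /= x _; case: i => /= i _ x0.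
  by repeat case: ifP => /=; try lia.
rewrite (eq_bigr _ (fun i _ => nbhd_x i)) !big_split /=.
rewrite (sum_ord_pick _ _ (fun i => if 1 < x then g i else 0)) !sum_ord_pick ltnS.
by rewrite (leq_ltn_trans (leq_pred x) (ltn_ord x)).
Qed.

Lemma fan_antimagic_of_labels n (g : nat -> nat) :
  (forall i j, i <= n -> j <= n -> g i = g j -> i = j) ->
  (forall i, i <= n -> 0 < g i <= n.+1) ->
  (forall i j, i <= n -> j <= n -> fan_weight n g i = fan_weight n g j -> i = j) ->
  distance_antimagic (@fan_adj n).
Proof.
move=> g_inj g_range w_inj; exists (fun x : 'I_n.+1 => g x); split; first split.
- by move=> x y /g_inj eq_xy; apply/val_inj/eq_xy; rewrite -ltnS.
- by move=> x; rewrite card_ord g_range // -ltnS.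
- by move=> x y; rewrite !vweight_fan => /w_inj eq_xy; apply/val_inj/eq_xy; rewrite -ltnS.
Qed.

(* Even n = 2k: centre labeled n+1, x_i labeled i.  The path weights are the
   odd numbers n+2i+1 (i < n) and the even number 2n, and the centre weight
   n(n+1)/2 differs from all of them. *)
Lemma fan_even_antimagic k : 0 < k -> distance_antimagic (@fan_adj k.*2).
Proof.
move=> k_gt0; set n := k.*2.
pose g (i : nat) : nat := if i == 0 then n.+1 else i.
have centre : (fan_weight n g 0).*2 = n * n.+1.
  rewrite /fan_weight /= -double_sum_succ; congr _.*2.
  by apply: eq_big_nat => i /andP[i_gt0 _]; rewrite /g eqn0Ngt i_gt0.
apply: (@fan_antimagic_of_labels n g) => [i j|i|i j]; rewrite /g /n.
- by repeat case: ifP; lia.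
- by case: ifP; lia.
- move: centre; rewrite /fan_weight /g /n.
  by repeat case: ifP => /=; nia.
Qed.

(* Odd n = 2k+1, n <> 3: centre labeled 1, x_i labeled i+1.  The interior
   path weights are the odd numbers 2i+3, the ends weigh 4 and n+1 (distinct
   unless n = 3), and the centre weighs n(n+3)/2. *)
Lemma fan_odd_antimagic k : k != 1 -> distance_antimagic (@fan_adj k.*2.+1).
Proof.
move=> k_neq1; set n := k.*2.+1.
pose g (i : nat) : nat := if i == 0 then 1 else i.+1.
have centre : (fan_weight n g 0).*2 = n * n.+1 + n.*2.
  rewrite /fan_weight /=.
  have -> : \sum_(1 <= i < n.+1) g i = \sum_(1 <= i < n.+1) (i + 1).
    by apply: eq_big_nat => i /andP[i_gt0 _]; rewrite /g eqn0Ngt i_gt0 addn1.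
  by rewrite big_split sum_nat_const_nat doubleD double_sum_succ subn1 muln1.
apply: (@fan_antimagic_of_labels n g) => [i j|i|i j]; rewrite /g /n.
- by repeat case: ifP; lia.
- by case: ifP; lia.
- move: k_neq1 centre; rewrite /fan_weight /g /n.
  by repeat case: ifP => /=; nia.
Qed.

Lemma twins_not_antimagic (T : finType) (adj : rel T) (x y : T) :
  x != y -> adj x =1 adj y -> ~ distance_antimagic adj.
Proof.
move=> /eqP x_neq_y same_nbhd [f [_ w_inj]]; apply: x_neq_y; apply: w_inj.
by apply: eq_bigl => z; rewrite same_nbhd.
Qed.

Lemma fan3_not_antimagic : ~ distance_antimagic (@fan_adj 3).
Proof.
apply: (@twins_not_antimagic _ _ (inord 1) (inord 3)).
- by apply/eqP => /(congr1 val); rewrite /= !inordK.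
- by case=> [[|[|[|[|?]]]] ?]; rewrite /fan_adj /= ?inordK.
Qed.

Theorem mainTheorem14 :
  (forall n : nat, 1 <= n -> n != 3 -> distance_antimagic (@fan_adj n))
  /\ ~ distance_antimagic (@fan_adj 3).
Proof.
split; last exact: fan3_not_antimagic.
move=> n; rewrite -(odd_double_half n); case: (odd n); rewrite ?add1n ?add0n.
- by move=> _ n_neq3; apply: fan_odd_antimagic; lia.
- by move=> n_gt0 _; apply: fan_even_antimagic; lia.
Qed.
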